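(* In the policy iteration scheme where $V_{q_c^{(k)}}$ is the fixed point of $\mathcal T_{q_c^{(k)}}$, $Q_{q_c^{(k)}}(x,a)=\eta\, r(x,a)+\log\mathbb E_{x'\sim p(\cdot|x,a)}[\exp(V_{q_c^{(k)}}(x'))]$, and $$q_c^{(k+1)}(a|x)=\frac{\pi(a|x)\exp(Q_{q_c^{(k)}}(x,a))}{\mathbb E_{a'\sim\pi(\cdot|x)}[\exp(Q_{q_c^{(k)}}(x,a'))]},$$ one has $V_{q_c^{(k+1)}}(x)\ge V_{q_c^{(k)}}(x)$ for all $x\in\mathcal X$ and all $k$.
   Context: Setting: a Markov decision process with finite state space $\mathcal X$, action space $\mathcal A$, reward $r$, transition kernel $p(\cdot|x,a)$; $\mathcal X^0$ is the set of terminal states and a terminal state is reached with probability one under every policy. A baseline policy $\pi$ and temperature $\eta>0$ are fixed. Value functions satisfy $V=0$ on $\mathcal X^0$. For a variational policy $q_c$, the $q_c$-induced operator is $$\mathcal T_{q_c}[V](x):=\mathbb E_{a\sim q_c(\cdot|x)}\Big[\eta\, r(x,a)-\log\frac{q_c(a|x)}{\pi(a|x)}+\max_{q_d}\mathbb E_{x'\sim q_d(\cdot|x,a)}\Big[V(x')-\log\frac{q_d(x'|x,a)}{p(x'|x,a)}\Big]\Big],$$ the maximum being over transition kernels $q_d(\cdot|x,a)$; it has a unique fixed point $V_{q_c}$. *)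

From HB Require Import structures.
From mathcomp Require Import all_boot all_order all_algebra.
From mathcomp Require Import all_classical all_reals all_analysis.
Set Implicit Arguments. Unset Strict Implicit. Unset Printing Implicit Defensive.
Import Order.TTheory GRing.Theory Num.Theory.
Import numFieldNormedType.Exports.
Local Open Scope classical_set_scope.
Local Open Scope ring_scope.

Section MDP.
Variables (R : realType) (X A : finType).

Definition is_dist (T : finType) (f : T -> R) :=
  (forall t, 0 <= f t) /\ \sum_(t : T) f t = 1.

Definition is_policy (mu : X -> A -> R) := forall x, is_dist (mu x).

Definition is_kernel (p : X -> A -> X -> R) := forall x a, is_dist (p x a).

(* probability of not having reached a terminal state within n steps,
   starting from x, under policy mu and transitions p *)
Fixpoint survival (X0 : {set X}) (p : X -> A -> X -> R) (mu : X -> A -> R)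
    (n : nat) (x : X) : R :=
  match n with
  | 0 => (x \notin X0)%:R
  | n'.+1 => (x \notin X0)%:R *
      \sum_(a : A) mu x a * \sum_(y : X) p x a y * survival X0 p mu n' y
  end.

Definition terminates (X0 : {set X}) (p : X -> A -> X -> R) :=
  forall mu, is_policy mu -> forall x,
    (fun n => survival X0 p mu n x) @ \oo --> (0 : R).

(* max over q_d(.|x,a) of E_{x'~q_d}[V(x') - log(q_d(x')/p(x'|x,a))];
   kernels q_d not absolutely continuous w.r.t. p(.|x,a) give -oo and are
   excluded; 0 log 0 = 0 is automatic since ln 0 = 0 in mathcomp. *)
Definition soft_backup (p : X -> A -> X -> R) (V : X -> R) (x : X) (a : A) : R :=
  sup [set v : R | exists qd : X -> R,
        [/\ is_dist qd, (forall y, 0 < qd y -> 0 < p x a y) &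
            v = \sum_(y : X) qd y * (V y - ln (qd y / p x a y))]].

Definition T_op (r : X -> A -> R) (p : X -> A -> X -> R) (pi : X -> A -> R)
    (eta : R) (qc : X -> A -> R) (V : X -> R) (x : X) : R :=
  \sum_(a : A) qc x a *
     (eta * r x a - ln (qc x a / pi x a) + soft_backup p V x a).

Definition is_fixed_point (X0 : {set X}) (r : X -> A -> R)
    (p : X -> A -> X -> R) (pi : X -> A -> R) (eta : R)
    (qc : X -> A -> R) (V : X -> R) :=
  (forall x, x \in X0 -> V x = 0) /\
  (forall x, x \notin X0 -> V x = T_op r p pi eta qc V x).

Definition Qfun (r : X -> A -> R) (p : X -> A -> X -> R) (eta : R)
    (V : X -> R) (x : X) (a : A) : R :=
  eta * r x a + ln (\sum_(y : X) p x a y * expR (V y)).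

End MDP.

(* The proof has three layers.
   1. The Gibbs variational principle on a finite type: for a probability
      vector c and any f, the maximum of E_w[f - log (w/c)] over probability
      vectors w absolutely continuous w.r.t. c is the log-sum-exp
      lse c f = log E_c[exp f], attained at the Gibbs distribution
      w = c exp f / E_c[exp f].  Hence the inner maximum of T_{q_c} is lse (p x a) V, and
      T_{q_c}[V](x) = E_{q_c}[Q(x,a) - log (q_c/pi)].
   2. Policy improvement: applying the variational principle once more in the
      action variable shows that, for D := V_k - V_{k+1}, at every
      non-terminal state D(x) <= E_{q_{k+1}}[lse p V_k - lse p V_{k+1}],
      and the right-hand side is at most max D since lse is monotone and
      commutes with adding constants.
   3. A maximum principle: if max D were positive, the states where it is
      attained would be non-terminal and closed under the transitions of
      q_{k+1}, so the survival probability from them would stay 1, contra-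
      dicting termination with probability one. *)
From HB Require Import structures.
From mathcomp Require Import all_boot all_order all_algebra.
From mathcomp Require Import all_classical all_reals all_analysis.
From mathcomp Require Import ring lra.
Set Implicit Arguments. Unset Strict Implicit. Unset Printing Implicit Defensive.
Import Order.TTheory GRing.Theory Num.Theory.
Import numFieldNormedType.Exports.
Local Open Scope ring_scope.

Section LogSumExp.
Variables (R : realType) (T : finType).
Implicit Types (c w f g : T -> R).

Definition lse c f : R := ln (\sum_t c t * expR (f t)).

Definition gibbs c f (t : T) : R :=
  c t * expR (f t) / \sum_s c s * expR (f s).

Lemma dist_pos w : is_dist w -> exists t, 0 < w t.
Proof.
case=> w0 w1; case: (pickP (fun t => 0 < w t)) => [t /= wt|H]; first by exists t.
have : \sum_t w t = 0.
  by apply: big1 => t _; apply/eqP; rewrite eq_le w0 andbT leNgt H.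
by rewrite w1 => /eqP; rewrite oner_eq0.
Qed.

Lemma sum_exp_gt0 c f t0 :
  (forall t, 0 <= c t) -> 0 < c t0 -> 0 < \sum_t c t * expR (f t).
Proof.
move=> c0 ct0; rewrite (bigD1 t0) //=; apply: ltr_pwDl.
  by rewrite mulr_gt0 // expR_gt0.
by apply: sumr_ge0 => t _; rewrite mulr_ge0 // expR_ge0.
Qed.

Lemma dist_sum_exp_gt0 c f : is_dist c -> 0 < \sum_t c t * expR (f t).
Proof. by move=> hc; have [t ct] := dist_pos hc; apply: sum_exp_gt0 ct; case: hc. Qed.

Lemma lse_shift c f (m : R) :
  is_dist c -> lse c (fun t => f t + m) = lse c f + m.
Proof.
move=> hc; rewrite /lse.
have -> : \sum_t c t * expR (f t + m) = (\sum_t c t * expR (f t)) * expR m.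
  by rewrite mulr_suml; apply: eq_bigr => t _; rewrite expRD mulrA.
by rewrite lnM ?posrE ?expR_gt0 ?dist_sum_exp_gt0 // expRK.
Qed.

Lemma lse_le c f g : is_dist c -> (forall t, f t <= g t) -> lse c f <= lse c g.
Proof.
move=> hc fg; rewrite /lse ler_ln ?posrE ?dist_sum_exp_gt0 //.
apply: ler_sum => t _; apply: ler_wpM2l; first by case: hc.
by rewrite ler_expR.
Qed.

Lemma lse_lt c f g t0 :
  is_dist c -> (forall t, f t <= g t) -> 0 < c t0 -> f t0 < g t0 ->
  lse c f < lse c g.
Proof.
move=> hc fg ct0 fgt0; rewrite /lse ltr_ln ?posrE ?dist_sum_exp_gt0 //.
case: hc => c0 _; rewrite (bigD1 t0) //= [X in _ < X](bigD1 t0) //=.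
apply: ltr_leD; first by rewrite ltr_pM2l // ltr_expR.
by apply: ler_sum => t _; rewrite ler_wpM2l // ler_expR.
Qed.

Lemma lse_gap_le c f g (M : R) :
  is_dist c -> (forall t, f t - g t <= M) -> lse c f - lse c g <= M.
Proof.
move=> hc fgM; rewrite lerBlDl -lse_shift //.
by apply: lse_le => // t; have := fgM t; lra.
Qed.

Lemma lse_gap_lt c f g (M : R) t0 :
  is_dist c -> (forall t, f t - g t <= M) -> 0 < c t0 -> f t0 - g t0 < M ->
  lse c f - lse c g < M.
Proof.
move=> hc fgM ct0 fgt0; rewrite ltrBlDl -lse_shift //.
by apply: (lse_lt hc _ ct0) => [t|]; [have := fgM t; lra | lra].
Qed.

End LogSumExp.

Lemma ln_le_subr1 (R : realType) (y : R) : 0 < y -> ln y <= y - 1.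
Proof.
move=> y0; have := @le_ln1Dx R (y - 1); rewrite addrCA subrr addr0; apply; lra.
Qed.

Lemma gibbs_term_le (R : realType) (w c u Z : R) :
  0 <= w -> 0 <= c -> (0 < w -> 0 < c) -> 0 < Z ->
  w * (u - ln (w / c)) - w * ln Z <= c * expR u / Z - w.
Proof.
move=> w0 c0 wc Z0; have [->|wn0] := eqVneq w 0.
  by rewrite !mul0r !subr0 divr_ge0 ?mulr_ge0 ?expR_ge0 ?(ltW Z0).
have wp : 0 < w by rewrite lt_neqAle eq_sym wn0.
have cp := wc wp.
pose y := c * expR u / (w * Z).
have yp : 0 < y by rewrite divr_gt0 ?mulr_gt0 ?expR_gt0.
have lny : ln y = ln c + u - ln w - ln Z.
  rewrite ln_div ?posrE ?mulr_gt0 ?expR_gt0 //.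
  by rewrite !lnM ?posrE ?expR_gt0 // expRK; lra.
have -> : c * expR u / Z = w * y by rewrite /y; field; rewrite !gt_eqF.
rewrite ln_div ?posrE // -subr_ge0.
have : 0 <= w * (y - 1 - ln y) by rewrite mulr_ge0 // subr_ge0 ln_le_subr1.
by rewrite lny; congr (0 <= _); ring.
Qed.

Section Gibbs.
Variables (R : realType) (T : finType).
Implicit Types (c w f : T -> R).

Lemma gibbs_le w c f :
  is_dist w -> (forall t, 0 <= c t) -> (forall t, 0 < w t -> 0 < c t) ->
  \sum_t w t * (f t - ln (w t / c t)) <= lse c f.
Proof.
move=> hw c0 wc; have [t0 wt0] := dist_pos hw.
set Z := \sum_t c t * expR (f t).
have Z0 : 0 < Z by apply: (sum_exp_gt0 _ c0 (wc _ wt0)).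
case: hw => w0 w1.
have : \sum_t (w t * (f t - ln (w t / c t)) - w t * ln Z)
    <= \sum_t (c t * expR (f t) / Z - w t).
  by apply: ler_sum => t _; apply: gibbs_term_le (w0 t) (c0 t) (wc t) Z0.
rewrite !sumrB -!mulr_suml w1 mul1r -/Z mulfV ?gt_eqF // /lse -/Z; lra.
Qed.

Hypotheses (c f : T -> R) (hc : is_dist c).

Lemma gibbs_dist : is_dist (gibbs c f).
Proof.
have Z0 := dist_sum_exp_gt0 f hc; case: hc => c0 _; split.
  by move=> t; rewrite /gibbs divr_ge0 ?mulr_ge0 ?expR_ge0 ?(ltW Z0).
by rewrite /gibbs -mulr_suml mulfV ?gt_eqF.
Qed.

Lemma gibbs_support t : 0 < gibbs c f t -> 0 < c t.
Proof.
case: hc => c0 _; rewrite /gibbs; have [->|ct] := eqVneq (c t) 0.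
  by rewrite !mul0r ltxx.
by move=> _; rewrite lt_neqAle eq_sym ct c0.
Qed.

Lemma gibbs_value :
  \sum_t gibbs c f t * (f t - ln (gibbs c f t / c t)) = lse c f.
Proof.
have Z0 := dist_sum_exp_gt0 f hc; have [_ g1] := gibbs_dist.
rewrite -[RHS]mul1r -g1 mulr_suml; apply: eq_bigr => t _.
have [ct|ct] := eqVneq (c t) 0; first by rewrite /gibbs ct !mul0r.
congr (_ * _).
have -> : gibbs c f t / c t = expR (f t) / \sum_s c s * expR (f s).
  by rewrite /gibbs; field; rewrite ct gt_eqF.
by rewrite ln_div ?posrE ?expR_gt0 // expRK /lse; ring.
Qed.

End Gibbs.

Section SoftBellman.
Variables (R : realType) (X A : finType).
Variables (r : X -> A -> R) (p : X -> A -> X -> R) (pi : X -> A -> R) (eta : R).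
Hypothesis hp : is_kernel p.

Lemma soft_backupE (V : X -> R) x a : soft_backup p V x a = lse (p x a) V.
Proof.
rewrite /soft_backup; set S := (X in sup X).
have S_ub : ubound S (lse (p x a) V).
  move=> v [qd [hq hqp ->]]; apply: gibbs_le => //; by case: (hp x a).
have S_lse : S (lse (p x a) V).
  exists (gibbs (p x a) V); split; [exact: gibbs_dist|exact: gibbs_support|].
  by rewrite gibbs_value.
apply/eqP; rewrite eq_le ge_sup /=; [|by exists (lse (p x a) V)|by []].
by apply: sup_upper_bound => //; split; exists (lse (p x a) V).
Qed.

Lemma T_opE (qc : X -> A -> R) (V : X -> R) x :
  T_op r p pi eta qc V x =
  \sum_a qc x a * (Qfun r p eta V x a - ln (qc x a / pi x a)).
Proof.
by apply: eq_bigr => a _; rewrite soft_backupE addrAC.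
Qed.

Definition greedy (V : X -> R) (x : X) : A -> R := gibbs (pi x) (Qfun r p eta V x).

Hypothesis hpi : is_policy pi.

Lemma greedy_policy V : is_policy (greedy V).
Proof. by move=> x; apply: gibbs_dist. Qed.

Lemma greedy_support V x a : 0 < greedy V x a -> 0 < pi x a.
Proof. exact: gibbs_support. Qed.

Lemma greedy_improvement (X0 : {set X}) (q0 : X -> A -> R) (V0 V1 : X -> R) y :
  is_policy q0 -> (forall x a, 0 < q0 x a -> 0 < pi x a) ->
  is_fixed_point X0 r p pi eta q0 V0 ->
  is_fixed_point X0 r p pi eta (greedy V0) V1 ->
  y \notin X0 ->
  V0 y - V1 y <=
    \sum_a greedy V0 y a * (lse (p y a) V0 - lse (p y a) V1).
Proof.
move=> hq0 hq0pi [_ fix0] [_ fix1] yX.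
have V0_le : V0 y <= \sum_a greedy V0 y a *
    (Qfun r p eta V0 y a - ln (greedy V0 y a / pi y a)).
  rewrite gibbs_value // fix0 // T_opE.
  by apply: gibbs_le; [exact: hq0 | case: (hpi y) | exact: hq0pi].
have -> : \sum_a greedy V0 y a * (lse (p y a) V0 - lse (p y a) V1) =
    \sum_a greedy V0 y a * (Qfun r p eta V0 y a - ln (greedy V0 y a / pi y a))
  - \sum_a greedy V0 y a * (Qfun r p eta V1 y a - ln (greedy V0 y a / pi y a)).
  by rewrite -sumrB; apply: eq_bigr => a _; rewrite /Qfun /lse; ring.
rewrite [V1 y]fix1 // T_opE; lra.
Qed.

End SoftBellman.

Section MaximumPrinciple.
Variables (R : realType) (X A : finType) (X0 : {set X}).
Variables (p : X -> A -> X -> R) (mu : X -> A -> R).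
Hypotheses (hp : is_kernel p) (hmu : is_policy mu).

Lemma survival_closed (S : X -> Prop) :
  (forall y, S y -> y \notin X0) ->
  (forall y a z, S y -> 0 < mu y a -> 0 < p y a z -> S z) ->
  forall n y, S y -> survival X0 p mu n y = 1.
Proof.
move=> SX0 Sclosed; elim=> [|n IH] y Sy /=; first by rewrite SX0.
rewrite SX0 // mul1r; case: (hmu y) => mu0 mu1; rewrite -[RHS]mu1.
apply: eq_bigr => a _; have [->|mua] := eqVneq (mu y a) 0; first by rewrite !mul0r.
have muap : 0 < mu y a by rewrite lt_neqAle eq_sym mua mu0.
case: (hp y a) => p0 p1; rewrite -[RHS]mulr1 -p1; congr (_ * _).
apply: eq_bigr => z _; have [->|pz] := eqVneq (p y a z) 0; first by rewrite mul0r.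
by rewrite IH ?mulr1 //; apply: (Sclosed y a) => //; rewrite lt_neqAle eq_sym pz p0.
Qed.

Lemma terminates_no_closed (S : X -> Prop) :
  terminates X0 p ->
  (forall y, S y -> y \notin X0) ->
  (forall y a z, S y -> 0 < mu y a -> 0 < p y a z -> S z) ->
  forall y, ~ S y.
Proof.
move=> hterm SX0 Sclosed y Sy; have surv0 := hterm mu hmu y.
have surv1 : (fun n => survival X0 p mu n y) = (fun=> 1).
  by apply: funext => n; exact: (survival_closed SX0 Sclosed n Sy).
rewrite surv1 in surv0.
have zero_one : (0 : R) = 1 := cvg_unique (@Rhausdorff R) surv0 (cvg_cst (1 : R)).
by have := @oner_neq0 R; rewrite -zero_one eqxx.
Qed.

Lemma avg_eq_max (T : finType) (w g : T -> R) (M : R) t :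
  is_dist w -> (forall s, g s <= M) -> M <= \sum_s w s * g s ->
  0 < w t -> g t = M.
Proof.
case=> w0 w1 gM Mavg wt.
have gap0 : \sum_s w s * (M - g s) = 0.
  apply/eqP; rewrite eq_le sumr_ge0 ?andbT => [|s _]; last first.
    by rewrite mulr_ge0 // subr_ge0.
  rewrite (eq_bigr (fun s => w s * M - w s * g s)) => [|s _]; last by ring.
  by rewrite sumrB -mulr_suml w1 mul1r subr_le0.
have gap_ge0 s : true -> 0 <= w s * (M - g s) by rewrite mulr_ge0 ?subr_ge0.
move: (psumr_eq0P gap_ge0 gap0 (i := t) isT) => /eqP.
by rewrite mulf_eq0 gt_eqF //= subr_eq0 => /eqP.
Qed.

Lemma soft_maximum_principle (V0 V1 : X -> R) :
  terminates X0 p ->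
  (forall y, y \in X0 -> V0 y = V1 y) ->
  (forall y, y \notin X0 ->
     V0 y - V1 y <= \sum_a mu y a * (lse (p y a) V0 - lse (p y a) V1)) ->
  forall x, V0 x <= V1 x.
Proof.
move=> hterm term dom x; pose D y := V0 y - V1 y.
pose xm := [arg max_(i > x) D i]%O.
have Dmax : forall y, D y <= D xm.
  by rewrite /xm; case: (@arg_maxP _ _ _ x predT D erefl) => i _ imax y; apply: imax.
suff : D xm <= 0 by have := Dmax x; rewrite /D; lra.
rewrite leNgt; apply/negP => Mpos; set M := D xm in Dmax Mpos.
have gap_le y a : lse (p y a) V0 - lse (p y a) V1 <= M.
  exact: lse_gap_le (hp y a) Dmax.
have argmax_live y : D y = M -> y \notin X0.
  by move=> Dy; apply/negP => /term V01; move: Mpos; rewrite -Dy /D V01 subrr ltxx.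
apply: (terminates_no_closed hterm argmax_live _ (erefl : D xm = M)).
move=> y a z Dy mua pz; apply/eqP; rewrite eq_le Dmax leNgt; apply/negP => Dz.
have gapM : lse (p y a) V0 - lse (p y a) V1 = M.
  apply: (avg_eq_max (hmu y) (gap_le y)) => //.
  by rewrite -Dy; apply: dom; apply: argmax_live.
by have := lse_gap_lt (hp y a) Dmax pz Dz; rewrite gapM ltxx.
Qed.

End MaximumPrinciple.

Theorem mainTheorem7 (R : realType) (X A : finType) (X0 : {set X})
  (r : X -> A -> R) (p : X -> A -> X -> R) (pi : X -> A -> R) (eta : R)
  (q : nat -> X -> A -> R) (V : nat -> X -> R) :
  0 < eta ->
  is_kernel p ->
  is_policy pi ->
  terminates X0 p ->
  is_policy (q 0%N) ->
  (forall x a, 0 < q 0%N x a -> 0 < pi x a) ->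
  (forall k, is_fixed_point X0 r p pi eta (q k) (V k)) ->
  (forall k x a, q k.+1 x a =
     pi x a * expR (Qfun r p eta (V k) x a) /
     \sum_(a' : A) pi x a' * expR (Qfun r p eta (V k) x a')) ->
  forall k x, V k x <= V k.+1 x.
Proof.
move=> _ hp hpi hterm hq0 hq0pi hfix hq k.
have qE j : q j.+1 = greedy r p pi eta (V j).
  by apply: funext => x; apply: funext => a; rewrite hq.
have [qk_pol qk_pi] : is_policy (q k) /\ forall x a, 0 < q k x a -> 0 < pi x a.
  case: k => [|j]; rewrite ?qE; split=> //.
  - exact: greedy_policy.
  - exact: greedy_support.
have fix_next := hfix k.+1; rewrite qE in fix_next.
apply: (soft_maximum_principle (mu := greedy r p pi eta (V k)) hp _ hterm).
- exact: greedy_policy.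
- by move=> y yX; rewrite (proj1 (hfix k)) ?(proj1 fix_next).
- by move=> y yX; apply: (greedy_improvement hp hpi qk_pol qk_pi (hfix k)).
Qed.
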